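(* Let $k$ be a field, $H$ a $k$-coalgebra, $X$ a global $H$-comodule regarded as a partial comodule datum $(X,X\otimes H,\mathrm{id}_{X\otimes H},\rho_X)$, and let $(Y,Y\bullet H,\pi_Y,\rho_Y)$ be a partial subcomodule of $X$. Then $Y$ is again global, i.e. $\pi_Y$ is an isomorphism.
   Context: A partial comodule datum over $H$ (in $k$-vector spaces) is a quadruple $(Y,Y\bullet H,\pi_Y,\rho_Y)$ with $\pi_Y:Y\otimes H\to Y\bullet H$ a surjective linear map and $\rho_Y:Y\to Y\bullet H$ linear. A morphism of partial comodule data $Y\to X$ is a pair $(f,f\bullet H)$ of linear maps $f:Y\to X$, $f\bullet H:Y\bullet H\to X\bullet H$ with $(f\bullet H)\rho_Y=\rho_Xf$ and $(f\bullet H)\pi_Y=\pi_X(f\otimes H)$. A partial subcomodule of $X$ is a partial comodule datum $Y$ together with a morphism $(f,f\bullet H):Y\to X$ such that both $f$ and $f\bullet H$ are injective. A partial comodule datum is called global when its map $\pi$ is an isomorphism. *)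

(* Tensor products of (arbitrary,
   possibly infinite-dimensional) vector spaces are not in the library,
   so they are specified by their universal property. *)
From HB Require Import structures.
From mathcomp Require Import all_boot all_order all_algebra.
From Stdlib Require Import ClassicalEpsilon.
Set Implicit Arguments. Unset Strict Implicit. Unset Printing Implicit Defensive.
Import GRing.Theory.
Local Open Scope ring_scope.

Section Tensor.
Variable k : fieldType.

Definition bilinear_map (U V W : lmodType k) (b : U -> V -> W) :=
  (forall (a : k) u u' v, b (a *: u + u') v = a *: b u v + b u' v) /\
  (forall (a : k) u v v', b u (a *: v + v') = a *: b u v + b u v').

Record tensor (U V : lmodType k) := Tensor {
  tcar :> lmodType k;
  tmul : U -> V -> tcar;
  tmul_bilinear : bilinear_map tmul;
  tensor_univ : forall (W : lmodType k) (b : U -> V -> W), bilinear_map b ->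
    exists l : {linear tcar -> W},
      (forall u v, l (tmul u v) = b u v) /\
      (forall l' : {linear tcar -> W}, (forall u v, l' (tmul u v) = b u v) ->
         forall t, l' t = l t)
}.

Lemma tmap_bilinear (U V U' V' : lmodType k) (T' : tensor U' V')
  (f : {linear U -> U'}) (g : {linear V -> V'}) :
  bilinear_map (fun u v => tmul T' (f u) (g v)).
Proof.
have [H1 H2] := tmul_bilinear T'.
split=> a u u' v; rewrite linearP; [exact: H1 | exact: H2].
Qed.

Definition tmap (U V U' V' : lmodType k) (T : tensor U V) (T' : tensor U' V')
  (f : {linear U -> U'}) (g : {linear V -> V'}) : {linear T -> T'} :=
  proj1_sig (constructive_indefinite_description _
    (tensor_univ T (tmap_bilinear T' f g))).

Definition idlin (U : lmodType k) : {linear U -> U} := (@idfun U : {linear U -> U}).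

(* Coalgebra: comultiplication and counit, with coassociativity
   (modulo the associator (H(x)H)(x)H ~ H(x)(H(x)H)) and counitality
   (modulo k(x)H ~ H ~ H(x)k). *)
Record coalgebra (H : lmodType k) := Coalgebra {
  cHH : tensor H H;
  cHH_H : tensor cHH H;
  cH_HH : tensor H cHH;
  ckH : tensor k^o H;
  cHk : tensor H k^o;
  comul : {linear H -> cHH};
  counit : {linear H -> k^o};
  coassoc : exists asc : {linear cHH_H -> cH_HH},
    (forall x y z, asc (tmul cHH_H (tmul cHH x y) z) = tmul cH_HH x (tmul cHH y z)) /\
    (forall h, asc (tmap cHH cHH_H comul (idlin H) (comul h))
               = tmap cHH cH_HH (idlin H) comul (comul h));
  counit_l : exists lam : {linear ckH -> H},
    (forall (a : k^o) h, lam (tmul ckH a h) = a *: h) /\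
    (forall h, lam (tmap cHH ckH counit (idlin H) (comul h)) = h);
  counit_r : exists lam : {linear cHk -> H},
    (forall h (a : k^o), lam (tmul cHk h a) = a *: h) /\
    (forall h, lam (tmap cHH cHk (idlin H) counit (comul h)) = h)
}.

Record comodule (H : lmodType k) (C : coalgebra H) := Comodule {
  cX :> lmodType k;
  cXH : tensor cX H;
  cXH_H : tensor cXH H;
  cX_HH : tensor cX (cHH C);
  cXk : tensor cX k^o;
  corho : {linear cX -> cXH};
  comod_coassoc : exists asc : {linear cXH_H -> cX_HH},
    (forall x y z, asc (tmul cXH_H (tmul cXH x y) z) = tmul cX_HH x (tmul (cHH C) y z)) /\
    (forall x, asc (tmap cXH cXH_H corho (idlin H) (corho x))
               = tmap cXH cX_HH (idlin cX) (comul C) (corho x));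
  comod_counit : exists lam : {linear cXk -> cX},
    (forall x (a : k^o), lam (tmul cXk x a) = a *: x) /\
    (forall x, lam (tmap cXH cXk (idlin cX) (counit C) (corho x)) = x)
}.

Record pcdatum (H : lmodType k) := PCDatum {
  pY : lmodType k;
  pYH : tensor pY H;
  pYbH : lmodType k;
  ppi : {linear pYH -> pYbH};
  ppi_surj : forall z : pYbH, exists t : pYH, ppi t = z;
  prho : {linear pY -> pYbH}
}.

Definition pc_morphism (H : lmodType k) (Y X : pcdatum H)
  (f : {linear pY Y -> pY X}) (fb : {linear pYbH Y -> pYbH X}) :=
  (forall y, fb (prho Y y) = prho X (f y)) /\
  (forall t, fb (ppi Y t) = ppi X (tmap (pYH Y) (pYH X) f (idlin H) t)).

Definition partial_subcomodule (H : lmodType k) (Y X : pcdatum H)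
  (f : {linear pY Y -> pY X}) (fb : {linear pYbH Y -> pYbH X}) :=
  [/\ pc_morphism f fb, injective f & injective fb].

Definition pc_global (H : lmodType k) (Y : pcdatum H) := bijective (ppi Y).

Lemma idlin_surj (U : lmodType k) (z : U) : exists t : U, idlin U t = z.
Proof. by exists z. Qed.

Definition comod_datum (H : lmodType k) (C : coalgebra H) (X : comodule C) :
  pcdatum H :=
  @PCDatum H (cX X) (cXH X) (cXH X) (idlin _) (@idlin_surj _) (corho X).

End Tensor.

(* Over a field, an injective linear map [f : Y -> X] has a linear retraction [g]
   (extend a basis of the image, i.e. take a maximal subspace of [X] meeting the
   image trivially).  Then [g (x) id] is a retraction of [f (x) id], which is
   therefore injective.  The morphism condition says [f.H o pi_Y = f (x) id],
   since [pi_X] is the identity; so [pi_Y] is injective, and it is surjective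
   by definition of a partial comodule datum. *)
From HB Require Import structures.
From mathcomp Require Import all_boot all_order all_algebra.
From mathcomp Require Import boolp classical_sets.
From Stdlib Require ClassicalEpsilon.
Set Implicit Arguments. Unset Strict Implicit. Unset Printing Implicit Defensive.
Import GRing.Theory.
Local Open Scope ring_scope.
Local Open Scope classical_set_scope.

Section LinearRetraction.
Variables (k : fieldType) (Y X : lmodType k) (f : {linear Y -> X}).
Hypothesis f_inj : injective f.

Definition lin_closed (K : set X) := forall a u v, K u -> K v -> K (a *: u + v).

Definition meets_image_trivially (K : set X) := forall y, K (f y) -> y = 0.

Definition image_complements := [set K | lin_closed K /\ meets_image_trivially K].

Section Closed.
Variables (K : set X) (K_closed : lin_closed K).

Lemma lin_closed0 u : K u -> K 0.
Proof. by move=> Ku; rewrite -(addNr u) -scaleN1r; exact: K_closed. Qed.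

Lemma lin_closedN u : K u -> K (- u).
Proof.
by move=> Ku; rewrite -[- u]addr0 -scaleN1r; apply: K_closed => //; exact: lin_closed0 Ku.
Qed.

Lemma lin_closedD u v : K u -> K v -> K (u + v).
Proof. by rewrite -[u in u + v]scale1r; exact: K_closed. Qed.

End Closed.

Lemma ex_maximal_image_complement :
  exists A, image_complements A /\ forall B, A `<` B -> ~ image_complements B.
Proof.
apply: Zorn_bigcup => F FP Ftot; split.
- move=> a u v [K FK Ku] [L FL Lv].
  have [KL|LK] := Ftot _ _ FK FL.
  + by exists L => //; have [closedL _] := FP _ FL; apply: closedL => //; exact: KL.
  + by exists K => //; have [closedK _] := FP _ FK; apply: closedK => //; exact: LK.
- by move=> y [K FK Kfy]; have [_] := FP _ FK; apply.
Qed.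

Section Maximal.
Variable A : set X.
Hypotheses (A_compl : image_complements A)
           (A_max : forall B, A `<` B -> ~ image_complements B).

Lemma maximal_image_complement0 : A 0.
Proof.
have [A_closed _] := A_compl; apply: contrapT => A0N.
apply: (A_max (B := [set 0])).
- split=> [u Au|/(_ 0 erefl) //].
  by case: A0N; exact: lin_closed0 Au.
- split=> [a _ _ -> ->|y fy0]; first by rewrite scaler0 addr0.
  by apply: f_inj; rewrite linear0.
Qed.

Lemma maximal_image_complement_spans x : exists y, A (x - f y).
Proof.
have [A_closed A_triv] := A_compl; apply: contrapT => xN.
(* Otherwise [A + k x] is a strictly larger complement. *)
pose B z := exists u a, A u /\ z = u + a *: x.
apply: (A_max (B := B)).
- split=> [u Au|BA]; first by exists u, 0; rewrite scale0r addr0.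
  apply: xN; exists 0; rewrite linear0 subr0; apply: BA.
  by exists 0, 1; rewrite add0r scale1r; split=> //; exact: maximal_image_complement0.
split.
- move=> c _ _ [u [a [Au ->]]] [v [b [Av ->]]].
  exists (c *: u + v), (c * a + b); split; first exact: A_closed.
  by rewrite scalerDr scalerDl scalerA addrACA.
- move=> y [u [a [Au fy]]]; have [a0|a0] := eqVneq a 0.
    by apply: A_triv; rewrite fy a0 scale0r addr0.
  exfalso; apply: xN; exists (a^-1 *: y).
  have -> : x - f (a^-1 *: y) = - (a^-1 *: u).
    by rewrite linearZ_LR fy scalerDr scalerA mulVf // scale1r opprD addrC addrNK.
  apply: lin_closedN => //; rewrite -[_ *: u]addr0.
  by apply: A_closed => //; exact: maximal_image_complement0.
Qed.

End Maximal.

Lemma ex_linear_retraction : exists g : {linear X -> Y}, cancel f g.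
Proof.
have [A [[A_closed A_triv] A_max]] := ex_maximal_image_complement.
have A_spans := maximal_image_complement_spans (conj A_closed A_triv) A_max.
pose g x := projT1 (cid (A_spans x)).
have g_unique x y : A (x - f y) -> g x = y.
  move=> Axy; apply/eqP; rewrite -subr_eq0; apply/eqP/A_triv.
  have -> : f (g x - y) = (x - f y) - (x - f (g x)).
    by rewrite linearB opprB [RHS]addrC addrA subrK.
  by apply: lin_closedD => //; apply: lin_closedN => //; exact: projT2 (cid (A_spans x)).
have g_linear : linear_for *:%R g.
  move=> a u v; apply: g_unique.
  have -> : a *: u + v - f (a *: g u + g v) = a *: (u - f (g u)) + (v - f (g v)).
    by rewrite linearP scalerBr opprD addrACA.
  by apply: A_closed; exact: projT2 (cid (A_spans _)).
exists (HB.pack_for {linear X -> Y} g (GRing.isLinear.Build _ _ _ _ g g_linear)) => y /=.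
by apply: g_unique; rewrite subrr; exact: maximal_image_complement0.
Qed.

End LinearRetraction.

Section TensorMaps.
Variable k : fieldType.

Lemma tmapE (U V U' V' : lmodType k) (T : tensor U V) (T' : tensor U' V')
  (f : {linear U -> U'}) (g : {linear V -> V'}) u v :
  tmap T T' f g (tmul T u v) = tmul T' (f u) (g v).
Proof.
by rewrite /tmap; case: ClassicalEpsilon.constructive_indefinite_description => l [].
Qed.

Lemma tensor_linear_ext (U V W : lmodType k) (T : tensor U V) (l1 l2 : {linear T -> W}) :
  (forall u v, l1 (tmul T u v) = l2 (tmul T u v)) -> l1 =1 l2.
Proof.
move=> l12; have [B1 B2] := tmul_bilinear T.
have l2_bilinear : bilinear_map (fun u v => l2 (tmul T u v)).
  by split=> a u u' v; rewrite ?B1 ?B2 linearP.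
have [l [_ l_unique]] := tensor_univ T l2_bilinear.
by move=> t; rewrite (l_unique l1 l12) (l_unique l2 (fun _ _ => erefl)).
Qed.

Lemma tmap_cancel (U V U' V' : lmodType k) (T : tensor U V) (T' : tensor U' V')
  (f : {linear U -> U'}) (f' : {linear U' -> U})
  (g : {linear V -> V'}) (g' : {linear V' -> V}) :
  cancel f f' -> cancel g g' -> cancel (tmap T T' f g) (tmap T' T f' g').
Proof.
move=> ff' gg' t.
apply: (tensor_linear_ext (l1 := tmap T' T f' g' \o tmap T T' f g) (l2 := idlin T)).
by move=> u v /=; rewrite !tmapE /= ff' gg'.
Qed.

Lemma tmap_inj (U V U' : lmodType k) (T : tensor U V) (T' : tensor U' V)
  (f : {linear U -> U'}) :
  injective f -> injective (tmap T T' f (idlin V)).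
Proof.
move=> /ex_linear_retraction [f' ff'].
exact: can_inj (@tmap_cancel _ _ _ _ T T' f f' (idlin V) (idlin V) ff' (fun _ => erefl)).
Qed.

End TensorMaps.

Section PartialComoduleData.
Variables (k : fieldType) (H : lmodType k).

Lemma pc_global_of_inj (Y : pcdatum H) : injective (ppi Y) -> pc_global Y.
Proof.
move=> pi_inj; pose pi_inv (z : pYbH Y) := projT1 (cid (ppi_surj z)).
have pi_invK z : ppi Y (pi_inv z) = z := projT2 (cid (ppi_surj z)).
by exists pi_inv => [t|z]; [apply: pi_inj; rewrite pi_invK|].
Qed.

Lemma pc_morphism_pi_inj (Y X : pcdatum H) (f : {linear pY Y -> pY X})
    (fb : {linear pYbH Y -> pYbH X}) :
  pc_morphism f fb -> injective f -> injective (ppi X) -> injective (ppi Y).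
Proof.
move=> [_ fb_pi] f_inj piX_inj t t' /(congr1 fb); rewrite !fb_pi.
by move=> /piX_inj /(tmap_inj f_inj).
Qed.

End PartialComoduleData.

Theorem mainTheorem8 (k : fieldType) (H : lmodType k) (C : coalgebra H)
  (X : comodule C) (Y : pcdatum H)
  (f : {linear pY Y -> pY (comod_datum X)})
  (fb : {linear pYbH Y -> pYbH (comod_datum X)}) :
  partial_subcomodule f fb -> pc_global Y.
Proof.
move=> [f_morph f_inj _]; apply: pc_global_of_inj.
exact: pc_morphism_pi_inj f_morph f_inj (@inj_id _).
Qed.
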